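(* For every $n\ge 3$, $\lceil \log_2 n\rceil\le \mathrm{isat}(n,\mathcal{N})\le 2n$.
   Context: $\mathcal{B}_n$ denotes the Boolean lattice $(2^{[n]},\subseteq)$. A family $\mathcal{F}\subseteq 2^{[n]}$ (ordered by inclusion) is induced-$\mathcal{P}$-saturated if it contains no induced copy of $\mathcal{P}$ (an injection $f$ with $u\le v\iff f(u)\subseteq f(v)$) but every family $\mathcal{F}'$ with $\mathcal{F}\subsetneq\mathcal{F}'\subseteq 2^{[n]}$ contains one. $\mathrm{isat}(n,\mathcal{P})$ is the minimum size of an induced-$\mathcal{P}$-saturated family in $\mathcal{B}_n$. $\mathcal{N}$ is the four-element poset on $\{A,B,C,D\}$ whose only strict relations are $A<B$, $C<B$, $C<D$ (so $A\parallel C$, $A\parallel D$, $B\parallel D$). *)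

From mathcomp Require Import all_boot.
Set Implicit Arguments. Unset Strict Implicit. Unset Printing Implicit Defensive.

(* The poset N on 'I_4 : A = 0, B = 1, C = 2, D = 3, with strict relations
   A < B, C < B, C < D.  Nle is its (reflexive) order relation. *)
Definition Nle (u v : 'I_4) : bool :=
  (u == v) || [|| (val u == 0) && (val v == 1),
                  (val u == 2) && (val v == 1) |
                  (val u == 2) && (val v == 3)].

Definition has_induced_copy (P : finType) (le : rel P) (n : nat)
  (F : {set {set 'I_n}}) : Prop :=
  exists f : P -> {set 'I_n},
    injective f /\ (forall u, f u \in F) /\
    (forall u v, le u v = (f u \subset f v)).

Definition induced_saturated (P : finType) (le : rel P) (n : nat)
  (F : {set {set 'I_n}}) : Prop :=
  ~ has_induced_copy le F /\
  (forall F' : {set {set 'I_n}}, F \proper F' -> has_induced_copy le F').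

From mathcomp Require Import all_boot.
Set Implicit Arguments. Unset Strict Implicit. Unset Printing Implicit Defensive.

(* Lower bound: in a saturated family every point i is separated from every
   other point j.  Otherwise take a minimal member W containing i (the full set
   is a member, since N has no greatest element) and X := W minus j; then X is
   not a member but compares with every other member exactly as W does, so a copy of
   N through X would either be a copy inside F (replace X by W) or use both X
   and W as two "twin" elements, and N has no twins.  Separation means
   x |-> {T in F | x in T} is injective, so n <= 2^|F|.
   Upper bound: the empty set, the singletons and the initial segments
   {0,...,k-1} form at most 2n sets.  The two maximal elements of N both lie
   strictly above an element that is not below everything, so they are sets of
   size at least 2, hence initial segments, hence comparable: no copy of N.
   A new set X has size >= 2 and contains some y with x < y for some x outside
   X.  If 0 is in X, then {y} < X > {0} < {0,...,x} is an induced N; otherwise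
   take c < y both in X and use {y} < X > {c} < {0,...,c}. *)

Lemma order_embedding_inj (P : finType) (le : rel P) n (f : P -> {set 'I_n}) :
  (forall u v, le u v -> le v u -> u = v) ->
  (forall u v, le u v = (f u \subset f v)) -> injective f.
Proof. by move=> le_anti fle u v fuv; apply: le_anti; rewrite fle fuv. Qed.

Lemma up_log_le_card_separating n (F : {set {set 'I_n}}) :
  (forall i j : 'I_n, i != j -> exists2 T, T \in F & (i \in T) != (j \in T)) ->
  up_log 2 n <= #|F|.
Proof.
move=> sep; apply: up_log_min => //.
pose trace (x : 'I_n) := [set T in F | x \in T].
have trace_inj : injective trace.
  move=> i j; apply: contra_eq => /sep[T TF iTjT].
  by apply: contra_neq iTjT => /setP/(_ T); rewrite !inE TF.
rewrite -card_powerset -[n in n <= _]card_ord -(card_imset _ trace_inj).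
apply: subset_leq_card; apply/subsetP => _ /imsetP[x _ ->].
by rewrite inE; apply/subsetP => T; rewrite inE => /andP[].
Qed.

Section SaturatedLowerBound.
Variables (P : finType) (le : rel P) (n : nat).
Hypothesis le_anti : forall u v, le u v -> le v u -> u = v.
Hypothesis no_greatest : forall u, exists v, ~~ le v u.
Hypothesis twin_free : forall p q, p != q ->
  exists r, [/\ r != p, r != q & (le p r != le q r) || (le r p != le r q)].
Implicit Types F : {set {set 'I_n}}.

Lemma saturated_extension F X : induced_saturated le F -> X \notin F ->
  exists2 f : P -> {set 'I_n},
    [/\ injective f, forall u, f u \in X |: F & forall u v, le u v = (f u \subset f v)]
    & exists p, f p = X.
Proof.
move=> [noF satF] XF.
have [f [f_inj [fF fle]]] : has_induced_copy le (X |: F).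
  by apply: satF; rewrite properUr // sub1set.
exists f => //; case: (pickP (fun p => f p == X)) => [p /eqP|fX]; first by exists p.
exfalso; apply: noF; exists f; split=> //; split=> // u.
by have := fF u; rewrite !inE fX.
Qed.

Lemma saturated_setT F : induced_saturated le F -> setT \in F.
Proof.
move=> satF; apply/contraT => TF.
have [f [_ _ fle] [p fp]] := saturated_extension satF TF.
have [v /negP] := no_greatest p.
by rewrite fle fp subsetT.
Qed.

Lemma saturated_no_twin_outside F W X : induced_saturated le F ->
  W \in F -> X \notin F ->
  (forall T, T \in F -> (X \subset T) = (W \subset T)) ->
  (forall T, T \in F -> T != W -> (T \subset X) = (T \subset W)) -> False.
Proof.
move=> satF WF XF up down.
have [f [f_inj fF fle] [p fp]] := saturated_extension satF XF.
have fF' u : u != p -> f u \in F.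
  move=> up'; have := fF u; rewrite !inE; case/orP => // /eqP fuX.
  by move: up'; rewrite -(inj_eq f_inj) fuX fp eqxx.
case: (pickP (fun q => f q == W)) => [q /eqP fq | fW].
  have pq : p != q by rewrite -(inj_eq f_inj) fp fq; apply: contraNneq XF => ->.
  have [r [rp rq /orP[]]] := twin_free pq; rewrite !fle fp fq.
    by rewrite up ?eqxx // fF'.
  by rewrite down ?eqxx ?fF' // -fq (inj_eq f_inj).
case: satF => noF _; apply: noF.
pose g u := if u == p then W else f u.
have gle u v : le u v = (g u \subset g v).
  rewrite fle /g; case: (eqVneq u p) => [->|up']; case: (eqVneq v p) => [->|vp];
    rewrite ?fp ?subxx ?up ?down ?fF' ?fW //.
exists g; split; first exact: order_embedding_inj gle.
by split=> // u; rewrite /g; case: eqP => [_|/eqP/fF'].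
Qed.

Lemma saturated_separates F (i j : 'I_n) : induced_saturated le F -> i != j ->
  exists2 T, T \in F & (i \in T) != (j \in T).
Proof.
move=> satF ij; apply/exists_inP/contraT; rewrite negb_exists_in => /forall_inP.
move=> same; exfalso.
have same' T : T \in F -> (i \in T) = (j \in T) by move/same/negPn/eqP.
pose hasi := [pred T : {set 'I_n} | (T \in F) && (i \in T)].
have hasiT : hasi setT by rewrite /= saturated_setT // inE.
have [W /andP[WF iW] Wmin] := arg_minnP (fun T : {set 'I_n} => #|T|) hasiT.
have Wminimal T : T \in F -> i \in T -> T \subset W -> T = W.
  by move=> TF iT TW; apply/eqP; rewrite eqEcard TW Wmin //= TF.
have XF : W :\ j \notin F.
  by apply/negP => /same'; rewrite !inE ij eqxx iW.
apply: (saturated_no_twin_outside satF WF XF) => T TF.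
  apply/idP/idP => [XT|]; last exact: subset_trans (subD1set W j).
  apply/subsetP => x xW; case: (eqVneq x j) => [->|xj].
    by rewrite -(same' _ TF) (subsetP XT) // !inE ij.
  by rewrite (subsetP XT) // !inE xj.
move=> TW; apply/idP/idP => [TX|]; first exact: subset_trans (subD1set W j).
move=> TsW; apply/subsetP => x xT; rewrite !inE (subsetP TsW) // andbT.
apply: contraNneq TW => xj; apply/eqP/Wminimal => //.
by rewrite (same' _ TF) -xj.
Qed.

Lemma saturated_card_ge_up_log F : induced_saturated le F -> up_log 2 n <= #|F|.
Proof. by move=> satF; apply: up_log_le_card_separating => i j; apply: saturated_separates. Qed.

End SaturatedLowerBound.

Lemma Nle_anti (u v : 'I_4) : Nle u v -> Nle v u -> u = v.
Proof.
by case: u => [[|[|[|[|?]]]] ?] //; case: v => [[|[|[|[|?]]]] ?] //= _ _; apply: val_inj.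
Qed.

Lemma Nle_no_greatest (u : 'I_4) : exists v, ~~ Nle v u.
Proof.
case: u => [[|[|[|[|?]]]] ?] //.
- by exists (@Ordinal 4 2 isT).
- by exists (@Ordinal 4 3 isT).
- by exists (@Ordinal 4 1 isT).
- by exists (@Ordinal 4 1 isT).
Qed.

Lemma Nle_twin_free (p q : 'I_4) : p != q ->
  exists r, [/\ r != p, r != q & (Nle p r != Nle q r) || (Nle r p != Nle r q)].
Proof.
case: p => [[|[|[|[|?]]]] ?] //; case: q => [[|[|[|[|?]]]] ?] // pq;
  try by rewrite eqE /= in pq.
all: first [ by exists (@Ordinal 4 0 isT) | by exists (@Ordinal 4 1 isT)
           | by exists (@Ordinal 4 2 isT) | by exists (@Ordinal 4 3 isT) ].
Qed.

Lemma induced_N_of n (G : {set {set 'I_n}}) (a b c d : {set 'I_n}) :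
  a \in G -> b \in G -> c \in G -> d \in G ->
  a \subset b -> c \subset b -> c \subset d ->
  ~~ (b \subset a) -> ~~ (a \subset c) -> ~~ (c \subset a) ->
  ~~ (a \subset d) -> ~~ (d \subset a) -> ~~ (b \subset c) ->
  ~~ (b \subset d) -> ~~ (d \subset b) -> ~~ (d \subset c) ->
  has_induced_copy Nle G.
Proof.
move=> aG bG cG dG ab cb cd ba ac ca ad da bc bd db dc.
pose f (u : 'I_4) := nth set0 [:: a; b; c; d] u.
have fle u v : Nle u v = (f u \subset f v).
  case: u => [[|[|[|[|?]]]] ?] //; case: v => [[|[|[|[|?]]]] ?] //;
  by rewrite /f /= ?subxx ?ab ?cb ?cd ?(negbTE ba) ?(negbTE ac) ?(negbTE ca)
     ?(negbTE ad) ?(negbTE da) ?(negbTE bc) ?(negbTE bd) ?(negbTE db) ?(negbTE dc).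
exists f; split; first exact: order_embedding_inj Nle_anti fle.
by split=> // -[[|[|[|[|?]]]] ?].
Qed.

Section UpperBound.
Variable n : nat.
Implicit Types (A B X : {set 'I_n}) (G : {set {set 'I_n}}).

Definition initial_segment A :=
  [forall x : 'I_n, forall y : 'I_n, (y \in A) ==> (x <= y) ==> (x \in A)].

Definition sat_family : {set {set 'I_n}} :=
  [set A : {set 'I_n} | (#|A| <= 1) || initial_segment A].

Lemma initial_segment_total A B :
  initial_segment A -> initial_segment B -> (A \subset B) || (B \subset A).
Proof.
move=> /forallP segA /forallP segB; case: (boolP (A \subset B)) => //= /subsetPn[x xA xB].
apply/subsetP => y yB; case: (leqP x y) => [xy|yx].
  by move: xB; have /forallP/(_ y) := segB x; rewrite yB xy /= => ->.
by have /forallP/(_ x) := segA y; rewrite xA (ltnW yx).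
Qed.

Lemma sat_family_N_free : ~ has_induced_copy Nle sat_family.
Proof.
move=> [f [f_inj [fF fle]]].
have segment_above u v w : Nle u v -> u != v -> ~~ Nle u w -> initial_segment (f v).
  move=> uv uv' uw; have := fF v; rewrite inE; case/orP => // fv1.
  have fuv : f u \proper f v by rewrite properEneq -fle uv (inj_eq f_inj) uv'.
  have fu0 : f u = set0.
    by apply/eqP; rewrite -cards_eq0 -leqn0 -ltnS (leq_trans (proper_card fuv)).
  by move: uw; rewrite fle fu0 sub0set.
have segB := segment_above (@Ordinal 4 0 isT) (@Ordinal 4 1 isT) (@Ordinal 4 2 isT).
have segD := segment_above (@Ordinal 4 2 isT) (@Ordinal 4 3 isT) (@Ordinal 4 0 isT).
by have := initial_segment_total (segB isT isT isT) (segD isT isT isT); rewrite -!fle.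
Qed.

Lemma N_from_gap G X (x y c z : 'I_n) : sat_family \subset G -> X \in G ->
  1 < #|X| -> y \in X -> c \in X -> c <= x < y -> z <= x -> z \notin X ->
  has_induced_copy Nle G.
Proof.
move=> sG XG X2 yX cX /andP[cx xy] zx zX.
have sing w : [set w] \in G by rewrite (subsetP sG) // inE cards1.
have segG : [set w : 'I_n | w <= x] \in G.
  rewrite (subsetP sG) // inE; apply/orP; right.
  apply/forallP => u; apply/forallP => v; rewrite !inE; apply/implyP => vx.
  by apply/implyP => /leq_trans->.
have Xnot1 w : ~~ (X \subset [set w]).
  by apply: contraTN X2 => /subset_leq_card; rewrite cards1 -leqNgt.
have yc : y != c by apply: contraTneq xy => ->; rewrite -leqNgt.
apply: (induced_N_of (sing y) XG (sing c) segG); rewrite ?sub1set ?inE //.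
- by rewrite eq_sym.
- by rewrite -ltnNge.
- by apply/subsetPn; exists c; rewrite ?inE // eq_sym.
- by apply/subsetPn; exists y; rewrite // inE -ltnNge.
- by apply/subsetPn; exists z; rewrite ?inE.
- apply/subsetPn; exists z; rewrite ?inE //.
  by apply: contraNneq zX => ->.
Qed.

Lemma sat_family_extension G : 0 < n -> sat_family \proper G -> has_induced_copy Nle G.
Proof.
move=> n0 /properP[sG [X XG]]; rewrite inE negb_or -ltnNge => /andP[X2].
move=> /forallPn[x /forallPn[y]]; rewrite !negb_imply => /andP[yX /andP[xy xX]].
have xy' : x < y by rewrite ltn_neqAle xy andbT; apply: contraNneq xX => /val_inj->.
pose z0 : 'I_n := Ordinal n0.
have [z0X | z0X] := boolP (z0 \in X).
  by apply: (N_from_gap sG XG X2 yX z0X _ (leqnn x) xX); rewrite xy' andbT.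
have [u [v [uX vX uv]]] : exists u v, [/\ u \in X, v \in X & u < v].
  case/card_gt1P: X2 => u [v [uX vX]]; case: (ltngtP u v) => [uv|vu|/val_inj->];
    rewrite ?eqxx //; by [exists u, v | exists v, u].
by apply: (@N_from_gap G X u v u z0 sG XG X2 vX uX _ _ z0X); rewrite ?leqnn.
Qed.

(* [inr 0] lists the full set; the singleton {0} is [inl 1]. *)
Definition sat_family_enum (u : 'I_n + 'I_n) : {set 'I_n} :=
  match u with
  | inl k => [set x : 'I_n | x < k]
  | inr k => if val k == 0 then setT else [set k]
  end.

Lemma sat_family_sub_enum : 1 < n -> sat_family \subset sat_family_enum @: setT.
Proof.
move=> n1; have n0 := ltnW n1.
pose z0 : 'I_n := Ordinal n0; pose z1 : 'I_n := Ordinal n1.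
apply/subsetP => A; rewrite inE => /orP[|segA].
  rewrite leq_eqVlt ltnS leqn0 => /orP[/cards1P[k ->]|/eqP/cards0_eq->].
    have [k0|k0] := eqVneq (val k) 0.
      apply/imsetP; exists (inl z1) => //; apply/setP => w.
      by rewrite !inE ltnS leqn0 -k0.
    by apply/imsetP; exists (inr k) => //=; rewrite (negbTE k0).
  by apply/imsetP; exists (inl z0) => //; apply/setP => w; rewrite !inE.
have [/existsP[x0 x0A] | /existsPn inA] := boolP [exists x, x \notin A].
  have [x xA xmin] := @arg_minnP _ x0 (fun x => x \notin A) val x0A.
  apply/imsetP; exists (inl x) => //; apply/setP => w; rewrite inE.
  apply/idP/idP => [wA|wx]; last by apply: contraTT wx => /xmin; rewrite -leqNgt.
  rewrite ltnNge; apply: contra xA => xw.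
  by have /forallP/(_ x)/forallP/(_ w) := segA; rewrite wA xw.
apply/imsetP; exists (inr z0) => //=.
by apply/setP => w; rewrite inE; have := inA w; rewrite negbK.
Qed.

Lemma card_sat_family : 1 < n -> #|sat_family| <= 2 * n.
Proof.
move=> n1; have -> : 2 * n = #|{: 'I_n + 'I_n}| by rewrite card_sum card_ord mul2n addnn.
rewrite -cardsT; apply: leq_trans (leq_imset_card sat_family_enum _).
exact: subset_leq_card (sat_family_sub_enum n1).
Qed.

End UpperBound.

Theorem theorem1p6 (n : nat) (hn : 3 <= n) :
  (forall F : {set {set 'I_n}}, induced_saturated Nle F -> up_log 2 n <= #|F|) /\
  (exists F : {set {set 'I_n}}, induced_saturated Nle F /\ #|F| <= 2 * n).
Proof.
split.
  exact: saturated_card_ge_up_log Nle_anti Nle_no_greatest Nle_twin_free.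
have n1 : 1 < n by apply: leq_trans hn.
exists (sat_family n); split; last exact: card_sat_family.
split; first exact: sat_family_N_free.
by move=> G; apply: sat_family_extension; apply: ltnW.
Qed.
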